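(* Let $\mathcal{H}$ be a real Hilbert space, $x^*\in\mathcal{H}$, $U$ an open neighborhood of $x^*$, and $f:U\to\mathcal{H}$ a continuously (Fréchet) differentiable map on $U$ such that $f'(x^* )$ is invertible (a bijective bounded linear operator) and the equation $f(x)=0$ has a solution in $U$. Define $v:\mathcal{H}\to\mathcal{H}$ by $v(x)=f'(x^* )x$. Then the pair $(f,v)$ is locally strongly monotone: there exist $\varepsilon>0$ with $B(x^*,\varepsilon)\subset U$ and $\alpha>0$ such that for all $x,y\in B(x^*,\varepsilon)$, \[ \langle f(x)-f(y),\, v(x)-v(y)\rangle\ \ge\ \alpha\|x-y\|^2 . \]
   Context: $B(x^*,\varepsilon)$ denotes the ball of center $x^*$ and radius $\varepsilon$ in $\mathcal{H}$. *)

From HB Require Import structures.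
From mathcomp Require Import all_boot all_order all_algebra.
From mathcomp Require Import all_classical all_reals all_analysis.
Set Implicit Arguments. Unset Strict Implicit. Unset Printing Implicit Defensive.
Import Order.TTheory GRing.Theory Num.Theory.
Import numFieldNormedType.Exports.
Local Open Scope classical_set_scope.
Local Open Scope ring_scope.

(* A real inner product on a normed space V whose norm is induced by it.
   A real Hilbert space is then a complete normed space (completeNormedModType)
   equipped with such an inner product. *)
Record inner_product (R : realType) (V : normedModType R) := InnerProduct {
  ip :> V -> V -> R;
  ip_sym : forall x y, ip x y = ip y x;
  ip_linl : forall (a : R) (x y z : V), ip (a *: x + y) z = a * ip x z + ip y z;
  ip_norm : forall x, ip x x = `|x| ^+ 2
}.

(* f is continuously Fréchet differentiable on U: differentiable at every
   point of U and x |-> 'd f x is continuous on U for the operator norm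
   (written out: || 'd f y h - 'd f x h || <= e ||h|| for all h). *)
Definition C1_on (R : realType) (V W : normedModType R) (U : set V) (f : V -> W) :=
  (forall x, U x -> differentiable f x) /\
  (forall x, U x -> forall e : R, 0 < e -> exists2 d : R, 0 < d &
     forall y, U y -> `|x - y| < d ->
       forall h : V, `|'d f y h - 'd f x h| <= e * `|h|).

From HB Require Import structures.
From mathcomp Require Import all_boot all_order all_algebra.
From mathcomp Require Import all_classical all_reals all_analysis.
From mathcomp Require Import ring lra.
Set Implicit Arguments. Unset Strict Implicit. Unset Printing Implicit Defensive.
Import Order.TTheory GRing.Theory Num.Theory.
Import numFieldNormedType.Exports.
Local Open Scope classical_set_scope.
Local Open Scope ring_scope.

(* Write A := f'(x* ).  A continuous linear bijection of a Banach space is bounded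
   below, |A h| >= c |h|: by Baire's theorem the closure of the image of some ball
   has interior, which yields approximate preimages of norm O(|y|) with error
   |y|/2, and summing the successive corrections gives exact ones.  Continuity of
   f' at x* gives a ball on which |f'(z) h - A h| <= (c/2) |h| <= |A h|/2.  For x, y
   in that ball the mean value theorem applied to s |-> <f(y + s(x - y)), A(x - y)>
   gives <f x - f y, A h> = <f'(z) h, A h> >= |A h|^2/2 >= (c^2/2) |h|^2 with
   h = x - y and z on the segment [y, x]. *)

Section OpenMapping.
Variables (R : realType) (V : normedModType R) (W : completeNormedModType R).

Definition approx_image (A : V -> W) (M : R) : set W :=
  [set z | forall d, 0 < d -> exists2 x, `|x| <= M & `|A x - z| < d].

Lemma open_approx_imageC (A : V -> W) M : open (~` approx_image A M).
Proof.
rewrite openE => z /existsNP [d /not_implyP [d0 far_z]].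
apply/nbhs_ballP; exists (d / 2); first by rewrite /= divr_gt0.
move=> w; rewrite -ball_normE /= => zw w_approx.
have [x xM Axw] := w_approx (d / 2) (divr_gt0 d0 (ltr0Sn _ 1)).
apply: far_z; exists x => //.
rewrite -(subrKA w) (le_lt_trans (ler_normD _ _)) // (splitr d) ltrD //.
by rewrite distrC.
Qed.

Lemma approx_image_ball (A : V -> W) : (forall z, exists x, A x = z) ->
  exists M y0 r, [/\ 0 < M, 0 < r & ball y0 r `<=` approx_image A M].
Proof.
move=> A_onto.
have [n] : exists n : nat, ~ dense (~` approx_image A n.+1%:R).
  apply/existsNP => dense_all.
  have [z [_ Iz]] := Baire (fun n => conj (open_approx_imageC A n.+1%:R)
                                         (dense_all n)) (ex_intro _ 0 I) openT.
  have [x Axz] := A_onto z.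
  apply: (Iz (Num.truncn `|x|) I) => d d0; exists x; first exact/ltW/truncnS_gt.
  by rewrite Axz subrr normr0.
move=> /denseNE [B [[y0 [oB By0]] B_approx]].
have /nbhs_ballP [r r0 rB] := open_nbhs_nbhs (conj oB By0).
exists n.+1%:R, y0, r; split => // z /rB Bz; apply: contrapT => nz.
by have : (B `&` ~` approx_image A n.+1%:R) z by []; rewrite B_approx.
Qed.

Variable A : {linear V -> W}.

Lemma approx_image_ball0 M y0 r : ball y0 r `<=` approx_image A M ->
  ball 0 r `<=` approx_image A (2 * M).
Proof.
move=> approx_ball z; rewrite -ball_normE /= sub0r normrN => zr d d0.
have d20 : 0 < d / 2 by rewrite divr_gt0.
have r0 : 0 < r := le_lt_trans (normr_ge0 z) zr.
have [x1 x1M Ax1] := approx_ball y0 (ballxx _ r0) _ d20.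
have y0z : ball y0 r (y0 + z) by rewrite -ball_normE /= opprD addNKr normrN.
have [x2 x2M Ax2] := approx_ball _ y0z _ d20.
exists (x2 - x1); first by have := ler_normB x2 x1; lra.
have -> : A (x2 - x1) - z = (A x2 - (y0 + z)) - (A x1 - y0).
  by rewrite linearB /= opprB (addrC y0 z) opprD !addrA subrK addrAC.
by rewrite (le_lt_trans (ler_normB _ _)) // (splitr d) ltrD.
Qed.

Lemma approx_half_preimage : (forall z, exists x, A x = z) ->
  exists2 K, 0 < K &
    forall y, exists x, `|x| <= K * `|y| /\ `|A x - y| <= `|y| / 2.
Proof.
move=> A_onto.
have [M [y0 [r [M0 r0 /approx_image_ball0 approx0]]]] := approx_image_ball A_onto.
exists (4 * M / r); first by rewrite divr_gt0 ?mulr_gt0.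
move=> y; have [->|y_neq0] := eqVneq y 0.
  by exists 0; rewrite linear0 subrr !normr0 mulr0.
have y_gt0 : 0 < `|y| by rewrite normr_gt0.
pose k := 2 * `|y| / r.
have k_gt0 : 0 < k by rewrite divr_gt0 ?mulr_gt0.
have ky_r : ball 0 r (k^-1 *: y).
  rewrite -ball_normE /= sub0r normrN normrZ gtr0_norm ?invr_gt0 //.
  have -> : k^-1 * `|y| = r / 2 by rewrite /k; field; rewrite !gt_eqF.
  lra.
have [x xM Ax] := approx0 _ ky_r (r / 4) (divr_gt0 r0 (ltr0Sn _ 3)).
exists (k *: x); split.
  have -> : 4 * M / r * `|y| = k * (2 * M) by rewrite /k; field; rewrite gt_eqF.
  by rewrite normrZ gtr0_norm // ler_wpM2l // ltW.
have -> : `|y| / 2 = k * (r / 4) by rewrite /k; field; rewrite gt_eqF.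
rewrite linearZ -{1}(scalerKV (lt0r_neq0 k_gt0) y) -scalerBr normrZ gtr0_norm //.
by rewrite ler_wpM2l // ltW.
Qed.

End OpenMapping.

Lemma half_approx_exact_preimage (R : realType) (V : completeNormedModType R)
    (W : normedModType R) (A : {linear V -> W}) (K : R) :
  continuous A -> 0 < K ->
  (forall y, exists x, `|x| <= K * `|y| /\ `|A x - y| <= `|y| / 2) ->
  forall y, exists2 x, A x = y & `|x| <= 2 * K * `|y|.
Proof.
move=> A_cont K_gt0 approx y; have [g gP] := choice approx.
pose res k := iter k (fun z => z - A (g z)) y.
pose u k := g (res k).
have res_le k : `|res k| <= `|y| * 2^-1 ^+ k.
  elim: k => [|k IH]; first by rewrite expr0 mulr1.
  rewrite /= distrC exprS mulrCA (mulrC 2^-1) (le_trans (proj2 (gP _))) //.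
  by rewrite ler_pM2r // invr_gt0.
have u_le k : `|u k| <= geometric (K * `|y|) 2^-1 k.
  by rewrite /= -mulrA (le_trans (proj1 (gP _))) // ler_wpM2l // ltW.
have A_series n : A (series u n) = y - res n.
  elim: n => [|n IH]; first by rewrite /series /= big_geq // linear0 subrr.
  by rewrite seriesSr linearD IH /u /= opprB addrA addrAC.
have half_lt1 : `|2^-1 : R| < 1 by rewrite ger0_norm ?invr_ge0 // invf_lt1 // ltr1n.
have u_normed_cvg : cvgn [normed series u].
  apply: (series_le_cvg _ _ u_le (is_cvg_geometric_series half_lt1)) => n //.
  by rewrite /geometric /= mulr_ge0 ?exprn_ge0 ?invr_ge0 ?mulr_ge0 // ltW.
exists (limn (series u)).
  have A_lim : (A \o series u) @ \oo --> y.
    apply/cvgrPdist_lt => e e0.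
    have /cvgrPdist_lt /(_ e e0) := cvg_geometric `|y| half_lt1.
    apply: filterS => n.
    rewrite /= A_series opprB addrCA subrr addr0 sub0r normrN.
    by apply: le_lt_trans; rewrite (le_trans (res_le n)) // ler_norm.
  have A_lim' : (A \o series u) @ \oo --> A (limn (series u)).
    by apply: continuous_cvg; [exact: A_cont | exact: normed_cvg].
  exact: cvg_unique _ A_lim' A_lim.
apply: le_trans (lim_series_norm u_normed_cvg) _.
have -> : 2 * K * `|y| = limn (series (geometric (K * `|y|) 2^-1)).
  by rewrite (cvg_lim _ (cvg_geometric_series half_lt1)) //; field.
apply: ler_lim => //; first exact: is_cvg_geometric_series.
by apply: nearW => n; apply: ler_sum => k _; exact: u_le.
Qed.

Lemma linear_bijective_bounded_below (R : realType) (V W : completeNormedModType R)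
    (A : {linear V -> W}) :
  continuous A -> bijective A -> exists2 c, 0 < c & forall x, c * `|x| <= `|A x|.
Proof.
move=> A_cont A_bij.
have A_onto z : exists x, A x = z by case: A_bij => B _ AB; exists (B z).
have [K K_gt0 approx] := approx_half_preimage A_onto.
exists (2 * K)^-1; first by rewrite invr_gt0 mulr_gt0.
move=> x; have [x' Ax' x'_le] := half_approx_exact_preimage A_cont K_gt0 approx (A x).
by rewrite ler_pdivrMl ?mulr_gt0 // -{1}(bij_inj A_bij Ax').
Qed.

Lemma ball_segment (R : realFieldType) (V : normedModType R) (c a b : V) (e t : R) :
  ball c e a -> ball c e b -> 0 <= t <= 1 -> ball c e (t *: (a - b) + b).
Proof.
rewrite -!ball_normE /= => ca cb /andP [t0 t1].
have -> : c - (t *: (a - b) + b) = t *: (c - a) + (1 - t) *: (c - b).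
  rewrite scalerBl scale1r addrCA -scalerBr (addrC c (- a)) addrKA opprK.
  by rewrite (addrC (- a) b) -(opprB a b) scalerN opprD addrA addrAC.
rewrite (le_lt_trans (ler_normD _ _)) // !normrZ !ger0_norm ?subr_ge0 //.
have [->|t_neq1] := eqVneq t 1; first by rewrite subrr mul0r addr0 mul1r.
have := ler_wpM2l t0 (ltW ca).
have : (1 - t) * `|c - b| < (1 - t) * e.
  by rewrite ltr_pM2l // subr_gt0 lt_neqAle t_neq1.
lra.
Qed.

Lemma is_derive_line_comp (R : realType) (U W W' : normedModType R) (f : U -> W)
    (L : {linear W -> W'}) (y h : U) (t : R) :
  continuous L -> differentiable f (t *: h + y) ->
  is_derive t 1 (fun s => L (f (s *: h + y))) (L ('d f (t *: h + y) h)).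
Proof.
move=> L_cont df.
pose g s : U := s *: h + y.
have [dg dgE] : is_diff t g (( *:%R ^~ h) + 0) by apply: is_diffD.
have dfg : differentiable (f \o g) t by apply: differentiable_comp.
have dLfg : differentiable (L \o (f \o g)) t.
  by apply: differentiable_comp => //; exact: linear_differentiable.
apply: DeriveDef; first exact/derivable1_diffP.
rewrite deriveE // (diff_comp dfg); last exact: linear_differentiable.
by rewrite (diff_lin _ L_cont) (diff_comp dg) // dgE /= !fctE scale1r addr0.
Qed.

Section InnerProduct.
Variables (R : realType) (V : normedModType R) (inner : inner_product V).

Lemma ip0l c : inner 0 c = 0.
Proof. by have := ip_linl inner 1 0 0 c; rewrite scale1r addr0 mul1r; lra. Qed.

Lemma ipDl a b c : inner (a + b) c = inner a c + inner b c.
Proof. by have := ip_linl inner 1 a b c; rewrite scale1r mul1r. Qed.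

Lemma ipZl k a c : inner (k *: a) c = k * inner a c.
Proof. by have := ip_linl inner k a 0 c; rewrite !addr0 ip0l addr0. Qed.

Lemma ipNl a c : inner (- a) c = - inner a c.
Proof. by rewrite -scaleN1r ipZl mulN1r. Qed.

Lemma ipBl a b c : inner (a - b) c = inner a c - inner b c.
Proof. by rewrite ipDl ipNl. Qed.

Lemma ipBr a b c : inner c (a - b) = inner c a - inner c b.
Proof. by rewrite ip_sym ipBl !(ip_sym _ c). Qed.

Lemma ip_le_avg_sqr a b : inner a b <= (`|a| ^+ 2 + `|b| ^+ 2) / 2.
Proof.
have := ip_norm inner (a - b); rewrite ipBl !ipBr !ip_norm (ip_sym _ b a).
by have := sqr_ge0 `|a - b|; lra.
Qed.

Lemma cauchy_schwarz a b : `|inner a b| <= `|a| * `|b|.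
Proof.
have [->|a_neq0] := eqVneq a 0; first by rewrite ip0l !normr0 mul0r.
have [->|b_neq0] := eqVneq b 0; first by rewrite ip_sym ip0l !normr0 mulr0.
have a_gt0 : 0 < `|a| by rewrite normr_gt0.
have b_gt0 : 0 < `|b| by rewrite normr_gt0.
suff ip_le a' : `|a'| = `|a| -> inner a' b <= `|a| * `|b|.
  by rewrite ler_norml ip_le // lerNl -ipNl ip_le ?normrN.
move=> a'_norm; have := ip_le_avg_sqr (`|a|^-1 *: a') (`|b|^-1 *: b).
rewrite ipZl ip_sym ipZl ip_sym !normrZ !normfV !normr_id a'_norm.
by rewrite !mulVf ?gt_eqF // expr1n mulrA -invfM ler_pdivrMl ?mulr_gt0 //; lra.
Qed.

Definition ipl (w u : V) := inner u w.

Lemma ipl_linear w : linear (ipl w).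
Proof. by move=> a u v; exact: ip_linl. Qed.

HB.instance Definition _ w := GRing.isLinear.Build R V R _ (ipl w) (ipl_linear w).

Lemma continuous_ipl w : continuous (ipl w).
Proof.
move=> u; apply/cvgrPdist_lt => e e_gt0; apply/nbhs_ballP.
have w1_gt0 : 0 < `|w| + 1 by rewrite ltr_wpDl.
exists (e / (`|w| + 1)); first by rewrite /= divr_gt0.
move=> u'; rewrite -ball_normE /= ltr_pdivlMr // => uu'.
rewrite /ipl -ipBl (le_lt_trans (cauchy_schwarz _ _)) // (le_lt_trans _ uu') //.
by rewrite ler_wpM2l // lerDl.
Qed.

Lemma ip_ge_half_sqr a b : `|b - a| <= `|a| / 2 -> `|a| ^+ 2 / 2 <= inner b a.
Proof.
move=> ba_le; have := cauchy_schwarz (b - a) a.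
rewrite ipBl ip_norm ler_norml => /andP [ip_ge _].
have := ler_wpM2r (normr_ge0 a) ba_le; rewrite expr2; lra.
Qed.

Lemma ip_mean_value (U : normedModType R) (f : U -> V) (x y : U) (w : V) :
  (forall t, 0 <= t <= 1 -> differentiable f (t *: (x - y) + y)) ->
  exists2 t, 0 <= t <= 1 &
    inner (f x - f y) w = inner ('d f (t *: (x - y) + y) (x - y)) w.
Proof.
move=> df.
pose phi (s : R) := ipl w (f (s *: (x - y) + y)).
pose dphi (s : R) := ipl w ('d f (s *: (x - y) + y) (x - y)).
have phi_der (s : R) : s \in `[0, 1]%R -> is_derive s 1 phi (dphi s).
  by rewrite in_itv => s01; exact: is_derive_line_comp (@continuous_ipl w) (df s s01).
have phi_der_oo (s : R) : s \in `]0, 1[%R -> is_derive s 1 phi (dphi s).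
  by rewrite in_itv /= => /andP [s0 s1]; apply: phi_der; rewrite in_itv /= !ltW.
have phi_cont : {within `[0, 1], continuous phi}.
  by apply: derivable_within_continuous => s /phi_der [].
have [t t01 phi_mvt] := MVT_segment ler01 phi_der_oo phi_cont.
exists t; first by move: t01; rewrite in_itv.
move: phi_mvt; rewrite /phi /dphi /ipl scale1r scale0r add0r subrK subr0 mulr1.
by rewrite ipBl.
Qed.

End InnerProduct.

Theorem theorem3p3 (R : realType) (H : completeNormedModType R)
    (inner : inner_product H) (xstar : H) (U : set H) (f : H -> H) :
  open U -> U xstar ->
  C1_on U f ->
  bijective ('d f xstar) ->
  (exists x0, U x0 /\ f x0 = 0) ->
  let v := fun x : H => 'd f xstar x in
  exists2 eps : R, 0 < eps & ball xstar eps `<=` U /\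
    exists2 alpha : R, 0 < alpha &
      forall x y, ball xstar eps x -> ball xstar eps y ->
        alpha * `|x - y| ^+ 2 <= inner (f x - f y) (v x - v y).
Proof.
move=> U_open Ux [df_U df_cont] A_bij _ v.
have [c c_gt0 A_ge] :=
  linear_bijective_bounded_below (diff_continuous (df_U _ Ux)) A_bij.
have [d d_gt0 df_near] := df_cont _ Ux (c / 2) (divr_gt0 c_gt0 (ltr0Sn _ 1)).
have /nbhs_ballP [r r_gt0 rU] : nbhs xstar U by apply: open_nbhs_nbhs.
pose eps := Num.min d r.
have eps_d : ball xstar eps `<=` ball xstar d by apply: le_ball; rewrite ge_min lexx.
have eps_U : ball xstar eps `<=` U.
  by apply: subset_trans rU; apply: le_ball; rewrite ge_min lexx orbT.
exists eps; first by rewrite lt_min d_gt0 r_gt0.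
split => //; exists (c ^+ 2 / 2); first by rewrite divr_gt0 // exprn_gt0.
move=> x y x_eps y_eps.
have seg t : 0 <= t <= 1 -> ball xstar eps (t *: (x - y) + y) by exact: ball_segment.
have [t t01 ->] :=
  ip_mean_value inner (v x - v y) (fun t t01 => df_U _ (eps_U _ (seg t t01))).
rewrite /v -linearB /=; set h := x - y; set z := t *: h + y.
have z_near : `|'d f z h - 'd f xstar h| <= `|'d f xstar h| / 2.
  apply: le_trans (df_near _ (eps_U _ (seg t t01)) _ h) _.
    by have := eps_d _ (seg t t01); rewrite -ball_normE.
  by have := A_ge h; lra.
apply: le_trans _ (ip_ge_half_sqr inner z_near).
have ch_ge0 : 0 <= c * `|h| by rewrite mulr_ge0 // ltW.
have := ler_pM ch_ge0 ch_ge0 (A_ge h) (A_ge h).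
by rewrite -!expr2 exprMn; lra.
Qed.
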